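(* Let $a,b\in\mathbb F^*$, let $g,h\in\mathcal R$ with $x^n-a=hg$, and set $\hat a=a\,b\,\theta^n(b^{-1})$. Then $gb$ is a right divisor of $x^n-\hat a$ and $$M^\theta_{\hat a}(\overline{gb})=M^\theta_a(\overline g)\,M^\theta_{\hat a}(\overline b).$$ Consequently the codes $\mathfrak v_a(\mathcal R\overline g)$ and $\mathfrak v_{\hat a}(\mathcal R\overline{gb})$ are scale-equivalent, i.e. there are nonzero $d_0,\dots,d_{n-1}\in\mathbb F$ such that $(u_0,\dots,u_{n-1})\mapsto(d_0u_0,\dots,d_{n-1}u_{n-1})$ maps the first code onto the second; in particular the two codes have the same Hamming weight enumerator and the same minimum Hamming distance.
   Context: $\mathbb F$ is a finite field, $\theta\in\mathrm{Aut}(\mathbb F)$, $\mathcal R=\mathbb F[x;\theta]$ the skew polynomial ring (elements $\sum f_ix^i$ with left coefficients, $xb=\theta(b)x$), $n\in\mathbb N$. For $e\in\mathbb F^*$, $\mathcal S_e=\mathcal R/\mathcal R(x^n-e)$, $\overline f$ is the coset of $f$ (in $M^\theta_e(\overline f)$ and $\mathfrak v_e(\cdot)$ taken in $\mathcal S_e$), $\mathcal R\overline f$ the left submodule generated by $\overline f$, and $\mathfrak v_e:\mathcal S_e\to\mathbb F^n$ the inverse of $(c_0,\dots,c_{n-1})\mapsto\overline{\sum_{i=0}^{n-1}c_ix^i}$. $M^\theta_e(\overline f)$ is the $n\times n$ matrix whose row with index $i$ ($0\le i\le n-1$) is $\mathfrak v_e(\overline{x^if})$. *)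

From HB Require Import structures.
From mathcomp Require Import all_boot all_order all_algebra.
From mathcomp Require Import boolp.
From Stdlib Require Import ClassicalEpsilon.
Set Implicit Arguments. Unset Strict Implicit. Unset Printing Implicit Defensive.
Import GRing.Theory.
Local Open Scope ring_scope.

(* Skew polynomial ring R = F[x; theta].  Elements are represented by their
   (left) coefficient sequences, i.e. by {poly F}; the ring addition is that of
   {poly F}, and the multiplication is the skew product determined by
   x b = theta(b) x :
     (sum_i f_i x^i)(sum_j g_j x^j) = sum_{i,j} f_i theta^i(g_j) x^(i+j). *)
Section Skew.
Variable F : finFieldType.
Variable theta : {rmorphism F -> F}.

Definition skew_mul (f g : {poly F}) : {poly F} :=
  \sum_(i < size f) \sum_(j < size g)
     (f`_i * iter i theta g`_j) *: 'X^(i + j).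

Definition in_lideal (n : nat) (e : F) (p : {poly F}) : Prop :=
  exists q : {poly F}, p = skew_mul q ('X^n - e%:P).

Definition vpoly (n : nat) (c : 'rV[F]_n) : {poly F} :=
  \sum_(i < n) c ord0 i *: 'X^i.

(* v_e(overline f): the (unique) c in F^n with overline(sum c_i x^i) = overline f
   in S_e = R / R(x^n - e), i.e. f - sum c_i x^i in R(x^n - e). *)
Definition vrep (n : nat) (e : F) (f : {poly F}) : 'rV[F]_n :=
  epsilon (inhabits 0) (fun c : 'rV[F]_n => in_lideal n e (f - vpoly c)).

Definition Mtheta (n : nat) (e : F) (f : {poly F}) : 'M[F]_n :=
  \matrix_(i < n, j < n) vrep n e (skew_mul 'X^i f) ord0 j.

Definition skew_code (n : nat) (e : F) (f : {poly F}) : pred 'rV[F]_n :=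
  fun u => `[< exists r : {poly F}, u = vrep n e (skew_mul r f) >].

End Skew.

Definition wH (F : finFieldType) (n : nat) (u : 'rV[F]_n) : nat :=
  #|[set i : 'I_n | u ord0 i != 0]|.

(* minimum Hamming distance between distinct codewords (n if there are no two
   distinct codewords) *)
Definition dmin (F : finFieldType) (n : nat) (C : pred 'rV[F]_n) : nat :=
  \big[minn/n]_(u | C u) \big[minn/n]_(v | C v && (u != v)) wH (u - v).

Definition scalev (F : finFieldType) (n : nat) (d : 'I_n -> F) (u : 'rV[F]_n)
  : 'rV[F]_n := \row_(i < n) (d i * u ord0 i).

Arguments skew_code [F] theta n e f _.

From HB Require Import structures.
From mathcomp Require Import all_boot all_order all_algebra.
From mathcomp Require Import boolp zify ring.
From Stdlib Require Import ClassicalEpsilon.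
Set Implicit Arguments. Unset Strict Implicit. Unset Printing Implicit Defensive.
Import GRing.Theory.
Local Open Scope ring_scope.

(* Right multiplication by a nonzero constant b is the whole story: since
   (x^n - a) b = theta^n(b) (x^n - ahat), it maps the left ideal R(x^n - a) into
   R(x^n - ahat), and on reduced representatives sum c_i x^i it acts as
   c_i |-> c_i theta^i(b).  Hence v_ahat(f b) is v_a(f) scaled coordinatewise by
   d_i = theta^i(b).  Taking f = x^i g gives the matrix identity (the matrix of
   the constant b is diag(d_i)), taking f = r g gives the scale equivalence of
   the codes, and scalings with nonzero factors preserve Hamming weights. *)

Lemma big_ord_widen_zero (V : nmodType) (m k : nat) (G : nat -> V) : (m <= k)%N ->
  (forall i, (m <= i < k)%N -> G i = 0) -> \sum_(i < m) G i = \sum_(i < k) G i.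
Proof.
move=> le_mk G0; rewrite -!(big_mkord xpredT) (big_cat_nat (leq0n m) le_mk) /=.
by rewrite [X in _ + X]big1_seq ?addr0 // => i /andP[_]; rewrite mem_iota subnKC // => /G0.
Qed.

Section SkewPolynomials.
Variables (F : finFieldType) (theta : {rmorphism F -> F}).
Local Notation "f ** g" := (skew_mul theta f g) (at level 40, left associativity).

Lemma iter_thetaM i (x y : F) :
  iter i theta (x * y) = iter i theta x * iter i theta y.
Proof. by elim: i => //= i ->; rewrite rmorphM. Qed.

Lemma iter_theta0 i : iter i theta 0 = 0.
Proof. by elim: i => //= i ->; rewrite rmorph0. Qed.

Lemma iter_theta1 i : iter i theta 1 = 1.
Proof. by elim: i => //= i ->; rewrite rmorph1. Qed.

Lemma iter_thetaV i (x : F) : iter i theta x^-1 = (iter i theta x)^-1.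
Proof. by elim: i => //= i ->; rewrite fmorphV. Qed.

Lemma iter_theta_eq0 i (x : F) : (iter i theta x == 0) = (x == 0).
Proof. by elim: i => //= i <-; rewrite fmorph_eq0. Qed.

Lemma coef_skew_mul (f g : {poly F}) k :
  (f ** g)`_k = \sum_(i < k.+1) f`_i * iter i theta g`_(k - i).
Proof.
pose G i := f`_i * (if (k < i)%N then 0 else iter i theta g`_(k - i)).
have -> : (f ** g)`_k = \sum_(i < size f) G i.
  rewrite coef_sum; apply: eq_bigr => i _.
  have -> : \sum_(j < size g) (f`_i * iter i theta g`_j) *: 'X^(i + j)
          = f`_i *: ('X^i * \poly_(j < size g) iter i theta g`_j).
    rewrite poly_def mulr_sumr scaler_sumr; apply: eq_bigr => j _.
    by rewrite -scalerA exprD scalerAr.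
  rewrite coefZ coefXnM coef_poly /G; case: ltnP => // _.
  by case: ltnP => // /(nth_default 0) ->; rewrite iter_theta0.
rewrite (big_ord_widen_zero (G := G) (leq_addr k.+1 (size f))); last first.
  by move=> i /andP[/(nth_default 0) fi _]; rewrite /G fi mul0r.
rewrite -(big_ord_widen_zero (G := G) (leq_addl (size f) k.+1)); last first.
  by move=> i /andP[lt_ki _]; rewrite /G lt_ki mulr0.
by apply: eq_bigr => i _; rewrite /G ltnNge -ltnS ltn_ord.
Qed.

Lemma skew_mulDl (f g p : {poly F}) : (f + g) ** p = f ** p + g ** p.
Proof.
apply/polyP => k; rewrite coefD !coef_skew_mul -big_split.
by apply: eq_bigr => i _; rewrite coefD mulrDl.
Qed.

Lemma skew_mulZl c (f p : {poly F}) : (c *: f) ** p = c *: (f ** p).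
Proof.
apply/polyP => k; rewrite coefZ !coef_skew_mul mulr_sumr.
by apply: eq_bigr => i _; rewrite coefZ mulrA.
Qed.

Lemma skew_mulBl (f g p : {poly F}) : (f - g) ** p = f ** p - g ** p.
Proof. by rewrite skew_mulDl -scaleN1r skew_mulZl scaleN1r. Qed.

Lemma skew_mul0l (p : {poly F}) : 0 ** p = 0.
Proof. by have := skew_mulZl 0 0 p; rewrite !scale0r. Qed.

Lemma skew_mulCl c (p : {poly F}) : c%:P ** p = c *: p.
Proof.
apply/polyP => k; rewrite coef_skew_mul big_ord_recl coefC eqxx subn0 coefZ.
by rewrite big1 ?addr0 // => i _; rewrite coefC /= mul0r.
Qed.

Lemma coef_skew_mulC (f : {poly F}) c k : (f ** c%:P)`_k = f`_k * iter k theta c.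
Proof.
rewrite coef_skew_mul big_ord_recr /= subnn coefC eqxx big1 ?add0r // => i _.
by rewrite coefC subn_eq0 leqNgt ltn_ord iter_theta0 mulr0.
Qed.

Lemma skew_mulAC (f g : {poly F}) c : (f ** g) ** c%:P = f ** (g ** c%:P).
Proof.
apply/polyP => k; rewrite coef_skew_mulC !coef_skew_mul mulr_suml.
apply: eq_bigr => i _; rewrite coef_skew_mulC iter_thetaM -iterD subnKC ?mulrA //.
by rewrite -ltnS.
Qed.

Lemma skew_mulCA (f g : {poly F}) c : f ** (c%:P ** g) = (f ** c%:P) ** g.
Proof.
apply/polyP => k; rewrite skew_mulCl !coef_skew_mul; apply: eq_bigr => i _.
by rewrite coef_skew_mulC coefZ iter_thetaM mulrA.
Qed.

Lemma skew_mul_modulusC n (a b : F) : b != 0 ->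
  ('X^n - a%:P) ** b%:P = (iter n theta b)%:P ** ('X^n - (a * b * iter n theta b^-1)%:P).
Proof.
move=> b0; rewrite skew_mulCl iter_thetaV; apply/polyP => k.
rewrite coef_skew_mulC coefZ !coefB !coefXn !coefC.
have nb0 : iter n theta b != 0 by rewrite iter_theta_eq0.
have [kn | kn] := eqVneq k n; have [k0 | k0] := eqVneq k 0%N.
- by rewrite -kn k0 /= mulfK // mulrC.
- by rewrite -kn subr0 mulr1 mul1r.
- by rewrite k0 /= !sub0r mulNr mulrN [iter n theta b * _]mulrC divfK.
- by rewrite subr0 mul0r mulr0.
Qed.

Lemma coef_skew_mul_monomial c j (p : {poly F}) k :
  ((c *: 'X^j) ** p)`_k = if (j <= k)%N then c * iter j theta p`_(k - j) else 0.
Proof.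
rewrite coef_skew_mul; case: leqP => [le_jk | lt_kj].
  rewrite (bigD1 (Ordinal (le_jk : (j < k.+1)%N))) //= coefZ coefXn eqxx mulr1.
  rewrite big1 ?addr0 // => i; rewrite coefZ coefXn -(inj_eq val_inj) /= eq_sym.
  by case: eqP => // _ _; rewrite mulr0 mul0r.
rewrite big1 // => i _; rewrite coefZ coefXn.
by rewrite ltn_eqF ?mulr0 ?mul0r // (leq_trans _ lt_kj) // ltnS -ltnS ltn_ord.
Qed.

End SkewPolynomials.

Section Reduction.
Variables (F : finFieldType) (theta : {rmorphism F -> F}) (n : nat) (e : F).
Local Notation "f ** g" := (skew_mul theta f g) (at level 40, left associativity).
Local Notation modulus := ('X^n - e%:P).

Lemma coef_vpoly (c : 'rV[F]_n) (i : 'I_n) : (vpoly c)`_i = c ord0 i.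
Proof.
rewrite /vpoly coef_sum (bigD1 i) //= coefZ coefXn eqxx mulr1 big1 ?addr0 // => j ji.
by move: ji; rewrite coefZ coefXn -(inj_eq val_inj) eq_sym => /negbTE ->; rewrite mulr0.
Qed.

Lemma coef_vpoly_ge (c : 'rV[F]_n) k : (n <= k)%N -> (vpoly c)`_k = 0.
Proof.
move=> le_nk; rewrite /vpoly coef_sum big1 // => j _; rewrite coefZ coefXn.
by rewrite gtn_eqF ?mulr0 // (leq_trans (ltn_ord j) le_nk).
Qed.

Lemma vpoly_inj : injective (@vpoly F n).
Proof. by move=> c1 c2 eq_c; apply/rowP => i; rewrite -!coef_vpoly eq_c. Qed.

Lemma vpolyB (c1 c2 : 'rV[F]_n) : vpoly (c1 - c2) = vpoly c1 - vpoly c2.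
Proof. by rewrite /vpoly -sumrB; apply: eq_bigr => i _; rewrite !mxE scalerBl. Qed.

Lemma vpoly_delta (k : 'I_n) : vpoly (\row_(l < n) (k == l)%:R : 'rV[F]_n) = 'X^k.
Proof.
apply/polyP => m; rewrite coefXn; case: (ltnP m n) => [lt_mn | le_nm].
  by rewrite -[m]/(val (Ordinal lt_mn)) coef_vpoly mxE eq_sym.
by rewrite coef_vpoly_ge // gtn_eqF // (leq_trans (ltn_ord k) le_nm).
Qed.

Lemma vpoly_skew_mulC (c : 'rV[F]_n) b :
  vpoly c ** b%:P = vpoly (scalev (fun i : 'I_n => iter i theta b) c).
Proof.
apply/polyP => k; rewrite coef_skew_mulC; case: (ltnP k n) => [lt_kn | le_nk].
  by rewrite -[k]/(val (Ordinal lt_kn)) !coef_vpoly mxE mulrC.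
by rewrite !coef_vpoly_ge // mul0r.
Qed.

Lemma coef_modulus k : modulus`_k = (k == n)%:R - (if k == 0%N then e else 0).
Proof. by rewrite coefB coefXn coefC. Qed.

Hypothesis n_gt0 : (0 < n)%N.

Lemma lead_coef_skew_mul_modulus (q : {poly F}) : q != 0 ->
  (q ** modulus)`_((size q).-1 + n) = lead_coef q.
Proof.
move=> q0; set m := (size q).-1.
have lt_m : (m < (m + n).+1)%N by rewrite ltnS leq_addr.
rewrite coef_skew_mul (bigD1 (Ordinal lt_m)) //= big1 ?addr0.
  by rewrite coef_modulus addKn eqxx gtn_eqF // subr0 iter_theta1 mulr1.
move=> i /= ne_im; case: (ltnP m i) => [lt_mi | le_im].
  by rewrite nth_default ?mul0r // (leq_trans (leqSpred _) lt_mi).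
have lt_im : (i < m)%N by rewrite ltn_neqAle le_im andbT; rewrite -(inj_eq val_inj) in ne_im.
have [ne_n ne_0] : (m + n - i != n)%N /\ (m + n - i != 0)%N by split; apply/eqP; lia.
by rewrite coef_modulus (negbTE ne_n) (negbTE ne_0) subr0 iter_theta0 mulr0.
Qed.

Lemma vpoly_lideal_factor_eq0 (c : 'rV[F]_n) (q : {poly F}) :
  vpoly c = q ** modulus -> q = 0.
Proof.
move=> eq_cq; apply/eqP; apply: contraT => q0.
have := lead_coef_skew_mul_modulus q0; rewrite -eq_cq coef_vpoly_ge ?leq_addl //.
by move/esym/eqP; rewrite lead_coef_eq0 (negbTE q0).
Qed.

Lemma size_reduce_modulus (f : {poly F}) : (n < size f)%N ->
  (size (f - (lead_coef f *: 'X^((size f).-1 - n)%N) ** modulus)%R < size f)%N.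
Proof.
move=> lt_nf; set m := (size f).-1.
have size_f : size f = m.+1 by rewrite prednK // (leq_ltn_trans _ lt_nf).
rewrite size_f ltnS; apply/leq_sizeP => k le_mk.
rewrite coefB coef_skew_mul_monomial coef_modulus.
have [le_jk ne_0] : (m - n <= k)%N /\ (k - (m - n) != 0)%N by split; [lia | apply/eqP; lia].
rewrite le_jk (negbTE ne_0) subr0; have [-> | ne_mk] := eqVneq k m.
  have le_nm : (n <= m)%N by rewrite -ltnS -size_f.
  by rewrite subKn // eqxx iter_theta1 mulr1 /lead_coef -/m subrr.
have [ne_n f_k] : (k - (m - n) != n)%N /\ f`_k = 0.
  by split; [apply/eqP; lia | apply: nth_default; rewrite size_f; lia].
by rewrite f_k (negbTE ne_n) iter_theta0 mulr0 subr0.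
Qed.

Lemma vpoly_truncated (f : {poly F}) : (size f <= n)%N -> vpoly (\row_(i < n) f`_i) = f.
Proof.
move=> le_fn; apply/polyP => k; case: (ltnP k n) => [lt_kn | le_nk].
  by rewrite -[k]/(val (Ordinal lt_kn)) coef_vpoly mxE.
by rewrite coef_vpoly_ge // nth_default // (leq_trans le_fn).
Qed.

Lemma exists_reduction (f : {poly F}) :
  exists c : 'rV[F]_n, in_lideal theta n e (f - vpoly c).
Proof.
move: {2}(size f).+1 (ltnSn (size f)) => s; elim: s f => // s IH f lt_fs.
have [le_fn | lt_nf] := leqP (size f) n.
  by exists (\row_(i < n) f`_i), 0; rewrite vpoly_truncated // subrr skew_mul0l.
have [c [q eq_q]] := IH _ (leq_trans (size_reduce_modulus lt_nf) lt_fs).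
exists c, (q + lead_coef f *: 'X^((size f).-1 - n)).
by rewrite skew_mulDl -eq_q addrAC subrK.
Qed.

Lemma vrep_spec (f : {poly F}) : in_lideal theta n e (f - vpoly (vrep theta n e f)).
Proof. exact: epsilon_spec (exists_reduction f). Qed.

End Reduction.

Lemma vrep_unique (F : finFieldType) (theta : {rmorphism F -> F}) n (e : F)
    (f : {poly F}) (c : 'rV[F]_n) :
  in_lideal theta n e (f - vpoly c) -> vrep theta n e f = c.
Proof.
case: n c => [|n] c [q eq_q]; first by apply/rowP => -[].
have [q' eq_q'] := vrep_spec theta e (ltn0Sn n) f.
have eq_c : vpoly c - vpoly (vrep theta n.+1 e f) = skew_mul theta (q' - q) ('X^(n.+1) - e%:P).
  by rewrite skew_mulBl -eq_q -eq_q'; ring.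
have q0 := vpoly_lideal_factor_eq0 (ltn0Sn n) (etrans (vpolyB _ _) eq_c).
by move: eq_c; rewrite q0 skew_mul0l => /eqP; rewrite subr_eq0 => /eqP/vpoly_inj.
Qed.

Lemma vrep_Xn (F : finFieldType) (theta : {rmorphism F -> F}) n (e : F) (k : 'I_n) :
  vrep theta n e 'X^k = \row_(l < n) (k == l)%:R.
Proof. by apply: vrep_unique; exists 0; rewrite vpoly_delta subrr skew_mul0l. Qed.

Section ScalingEquivalence.
Variables (F : finFieldType) (n : nat) (d : 'I_n -> F).
Hypothesis d_neq0 : forall i, d i != 0.

Lemma scalevK : cancel (scalev d) (scalev (fun i => (d i)^-1)).
Proof. by move=> u; apply/rowP => i; rewrite !mxE mulrA mulVf ?mul1r. Qed.

Lemma scalevKV : cancel (scalev (fun i => (d i)^-1)) (scalev d).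
Proof. by move=> u; apply/rowP => i; rewrite !mxE mulrA mulfV ?mul1r. Qed.

Lemma scalev_inj : injective (scalev d).
Proof. exact: can_inj scalevK. Qed.

Lemma scalevB (u v : 'rV[F]_n) : scalev d (u - v) = scalev d u - scalev d v.
Proof. by apply/rowP => i; rewrite !mxE mulrBr. Qed.

Lemma wH_scalev (u : 'rV[F]_n) : wH (scalev d u) = wH u.
Proof. by apply: eq_card => i; rewrite !inE mxE mulf_eq0 negb_or d_neq0. Qed.

Variables (C1 C2 : pred 'rV[F]_n).
Hypothesis C2_scalev : forall u, C2 (scalev d u) = C1 u.

Lemma scalev_onto w : C2 w -> exists2 u, C1 u & w = scalev d u.
Proof. by move=> C2w; exists (scalev (fun i => (d i)^-1) w); rewrite -?C2_scalev scalevKV. Qed.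

Lemma card_weight_scalev k :
  #|[set u | C1 u & wH u == k]| = #|[set u | C2 u & wH u == k]|.
Proof.
have -> : [set u | C2 u & wH u == k] = scalev d @: [set u | C1 u & wH u == k].
  apply/setP => w; apply/idP/imsetP => [|[u]]; rewrite !inE.
    case/andP=> /scalev_onto[u C1u ->]; rewrite wH_scalev => wk.
    by exists u; rewrite // inE C1u.
  by case/andP=> C1u wk ->; rewrite C2_scalev C1u wH_scalev.
by rewrite card_imset //; apply: scalev_inj.
Qed.

(* [reindex] on a big minn needs minn to be a commutative law. *)
HB.instance Definition _ := SemiGroup.isComLaw.Build nat minn minnA minnC.

Lemma dmin_scalev : dmin C1 = dmin C2.
Proof.
have scalev_bij : bijective (scalev d) by exists (scalev (fun i => (d i)^-1));
  [exact: scalevK | exact: scalevKV].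
rewrite /dmin [RHS](reindex (scalev d) (onW_bij _ scalev_bij)) /=.
apply: eq_big => [u | u _]; first by rewrite C2_scalev.
rewrite [RHS](reindex (scalev d) (onW_bij _ scalev_bij)) /=.
apply: eq_big => [v | v _]; first by rewrite C2_scalev (inj_eq scalev_inj).
by rewrite -scalevB wH_scalev.
Qed.

End ScalingEquivalence.

Section RightMultiplicationByConstant.
Variables (F : finFieldType) (theta : {rmorphism F -> F}) (n : nat) (a b : F).
Hypothesis b_neq0 : b != 0.
Local Notation "f ** g" := (skew_mul theta f g) (at level 40, left associativity).
Local Notation ahat := (a * b * iter n theta b^-1).
Local Notation d := (fun i : 'I_n => iter i theta b).

Lemma vrep_skew_mulC (f : {poly F}) :
  vrep theta n ahat (f ** b%:P) = scalev d (vrep theta n a f).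
Proof.
case: n => [|m]; first by apply/rowP => -[].
apply: vrep_unique; have [q eq_q] := vrep_spec theta a (ltn0Sn m) f.
exists (q ** (iter m.+1 theta b)%:P).
by rewrite -vpoly_skew_mulC -skew_mulBl eq_q skew_mulAC skew_mul_modulusC // skew_mulCA.
Qed.

Lemma Mtheta_C : Mtheta theta n ahat b%:P = diag_mx (\row_(i < n) d i).
Proof.
apply/matrixP => i j; rewrite !mxE vrep_skew_mulC mxE vrep_Xn !mxE.
by case: eqP => [->|]; rewrite ?mulr1 ?mulr0 ?mulr0n.
Qed.

Lemma Mtheta_skew_mulC (f : {poly F}) :
  Mtheta theta n ahat (f ** b%:P) = Mtheta theta n a f *m Mtheta theta n ahat b%:P.
Proof.
rewrite Mtheta_C mul_mx_diag; apply/matrixP => i j.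
by rewrite !mxE -skew_mulAC vrep_skew_mulC mxE mulrC.
Qed.

Lemma right_divisor_skew_mulC (g h : {poly F}) : 'X^n - a%:P = h ** g ->
  'X^n - ahat%:P = ((iter n theta b)^-1 *: h) ** (g ** b%:P).
Proof.
move=> eq_hg; rewrite skew_mulZl -skew_mulAC -eq_hg skew_mul_modulusC //.
by rewrite skew_mulCl scalerA mulVf ?iter_theta_eq0 ?scale1r.
Qed.

Lemma skew_code_skew_mulC (g : {poly F}) (u : 'rV[F]_n) :
  skew_code theta n ahat (g ** b%:P) (scalev d u) = skew_code theta n a g u.
Proof.
apply/asboolP/asboolP => -[r eq_u]; exists r; last first.
  by rewrite eq_u -skew_mulAC vrep_skew_mulC.
move: eq_u; rewrite -skew_mulAC vrep_skew_mulC; apply: scalev_inj => i.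
by rewrite iter_theta_eq0.
Qed.

End RightMultiplicationByConstant.

Theorem theorem5p4 (F : finFieldType) (theta : {rmorphism F -> F}) (n : nat)
  (a b : F) (g h : {poly F}) :
  a != 0 -> b != 0 ->
  'X^n - a%:P = skew_mul theta h g ->
  let ahat := a * b * iter n theta b^-1 in
  let gb := skew_mul theta g b%:P in
  [/\ exists h' : {poly F}, 'X^n - ahat%:P = skew_mul theta h' gb,
      Mtheta theta n ahat gb = Mtheta theta n a g *m Mtheta theta n ahat b%:P,
      exists d : 'I_n -> F,
        (forall i, d i != 0) /\
        (forall u, skew_code theta n a g u -> skew_code theta n ahat gb (scalev d u)) /\
        (forall w, skew_code theta n ahat gb w ->
                   exists2 u, skew_code theta n a g u & w = scalev d u),
      (forall k : nat,
         #|[set u | skew_code theta n a g u & wH u == k]| =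
         #|[set u | skew_code theta n ahat gb u & wH u == k]|)
    & dmin (skew_code theta n a g) = dmin (skew_code theta n ahat gb)].
Proof.
move=> _ b_neq0 eq_hg ahat gb.
pose d (i : 'I_n) := iter i theta b.
have d_neq0 i : d i != 0 by rewrite iter_theta_eq0.
have code_scalev u : skew_code theta n ahat gb (scalev d u) = skew_code theta n a g u.
  exact: skew_code_skew_mulC.
split.
- by exists ((iter n theta b)^-1 *: h); apply: right_divisor_skew_mulC.
- exact: Mtheta_skew_mulC.
- exists d; split=> //; split=> [u|]; first by rewrite code_scalev.
  exact: scalev_onto.
- exact: (card_weight_scalev d_neq0 code_scalev).
- exact: (dmin_scalev d_neq0 code_scalev).
Qed.
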